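(* Let $n,m>3$ be integers and let $\psi$ be an automorphism of $\mathcal{CSR}(m,n)$, and suppose $\psi_1,\dots,\psi_m$ are permutations of $\mathbb{Z}_n$ and $\sigma$ is a permutation of $[m]$ such that $\psi\big(\sum_i x_ie_i\big)=\sum_i\psi_i(x_i)e_{\sigma(i)}$ for every vertex. Then there exist $d_1,\dots,d_m\in\mathbb{Z}_n$ such that the functions $\psi_1+d_1,\dots,\psi_m+d_m$ on $\mathbb{Z}_n$ are all equal.
   Context: For positive integers $m,n$, the cyclic simplicial rook graph $\mathcal{CSR}(m,n)$ is the graph whose vertices are the vectors $(a_1,\dots,a_m)\in\mathbb{Z}_n^m$ with $a_1+\cdots+a_m\equiv 0 \pmod n$, two vertices being adjacent if and only if their vectors differ in exactly two coordinates. $[m]=\{1,\dots,m\}$ and $e_i\in\mathbb{Z}_n^m$ is the vector with $1$ in coordinate $i$ and $0$ elsewhere. For a function $f:\mathbb{Z}_n\to\mathbb{Z}_n$ and $d\in\mathbb{Z}_n$, $f+d$ denotes $x\mapsto f(x)+d$. *)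

From HB Require Import structures.
From mathcomp Require Import all_boot all_order all_algebra all_fingroup.
Set Implicit Arguments. Unset Strict Implicit. Unset Printing Implicit Defensive.
Import GRing.Theory.
Local Open Scope ring_scope.

(* Vectors of Z_n^m, indexed by 'I_m (coordinates 1..m are 0..m-1). *)
Notation vecZ m n := {ffun 'I_m -> 'Z_n}.

Definition e_ (m n : nat) (i : 'I_m) : vecZ m n := [ffun j => (j == i)%:R].
Arguments e_ : clear implicits.

Definition is_vertex (m n : nat) (x : vecZ m n) : bool := \sum_(i < m) x i == 0.

Definition CSRvert (m n : nat) := {x : vecZ m n | is_vertex x}.

Definition csr_adj (m n : nat) (x y : CSRvert m n) : bool :=
  #|[set k : 'I_m | val x k != val y k]| == 2%N.

Definition csr_aut (m n : nat) (psi : {perm CSRvert m n}) : Prop :=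
  forall x y : CSRvert m n, csr_adj (psi x) (psi y) = csr_adj x y.

Definition vscale (m n : nat) (c : 'Z_n) (v : vecZ m n) : vecZ m n :=
  [ffun j => c * v j].

From HB Require Import structures.
From mathcomp Require Import all_boot all_order all_algebra all_fingroup.
Set Implicit Arguments. Unset Strict Implicit. Unset Printing Implicit Defensive.
Import GRing.Theory.
Local Open Scope ring_scope.

(* Since psi x is a vertex, sum_i psi_i(x_i) = 0 for every vertex x.  Comparing
   the vertices a e_i - a e_j and 0 gives
   psi_i(a) - psi_i(0) = -(psi_j(-a) - psi_j(0)) whenever i <> j, and going
   through a third index l shows that psi_i(a) - psi_i(0) does not depend on i,
   so d_i = -psi_i(0) works. *)

Lemma exists_ord_neq2 (m : nat) (i j : 'I_m) :
  (2 < m)%N -> exists l : 'I_m, (l != i) && (l != j).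
Proof.
move=> m_gt2; have /subsetPn[l _] : ~~ ([set: 'I_m] \subset [set i; j]).
  apply: contraL m_gt2 => /subset_leq_card; rewrite cardsT card_ord cards2.
  by rewrite -leqNgt => /leq_trans; apply; case: (i != j).
by rewrite !inE negb_or => ?; exists l.
Qed.

Lemma sum_pred1_natr (R : pzSemiRingType) (I : finType) (i : I) :
  \sum_k ((k == i)%:R : R) = 1.
Proof. by rewrite (bigD1 i) //= big1 => [|k /negbTE->]; rewrite ?eqxx ?addr0. Qed.

Lemma sum_coord_scale_e_ (m n : nat) (c : 'I_m -> 'Z_n) (f : 'I_m -> 'I_m) :
  \sum_k (\sum_i vscale (c i) (e_ m n (f i))) k = \sum_i c i.
Proof.
under eq_bigr do rewrite sum_ffunE.
rewrite exchange_big; apply: eq_bigr => i _.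
under eq_bigr do rewrite !ffunE.
by rewrite -mulr_sumr sum_pred1_natr mulr1.
Qed.

Definition dipole (m n : nat) (i j : 'I_m) (a : 'Z_n) : vecZ m n :=
  vscale a (e_ m n i - e_ m n j).

Lemma dipole_vertex (m n : nat) (i j : 'I_m) (a : 'Z_n) :
  is_vertex (dipole i j a).
Proof.
apply/eqP; under eq_bigr do rewrite !ffunE.
by rewrite -mulr_sumr sumrB !sum_pred1_natr subrr mulr0.
Qed.

Lemma dipoleE (m n : nat) (i j k : 'I_m) (a : 'Z_n) : i != j ->
  dipole i j a k = if k == i then a else if k == j then - a else 0.
Proof.
move=> ij; rewrite !ffunE; have [-> | ki] := eqVneq k i.
  by rewrite (negbTE ij) subr0 mulr1.
by case: (k == j); rewrite ?mulr0n ?mulr1n ?subrr ?mulr0 // sub0r mulrN1.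
Qed.

Section CoordinatewiseMap.

Variables (m n : nat) (phi : CSRvert m n -> CSRvert m n).
Variables (f : 'I_m -> 'Z_n -> 'Z_n) (sigma : 'I_m -> 'I_m).
Hypothesis phiE : forall x : CSRvert m n,
  val (phi x) = \sum_(i < m) vscale (f i (val x i)) (e_ m n (sigma i)).

Lemma sum_coord_vertex (x : CSRvert m n) : \sum_i f i (val x i) = 0.
Proof. by rewrite -(sum_coord_scale_e_ _ sigma) -phiE; apply/eqP; case: (phi x). Qed.

Lemma shift_oppN (i j : 'I_m) (a : 'Z_n) : i != j ->
  (f i a - f i 0) + (f j (- a) - f j 0) = 0.
Proof.
move=> ij; have ji : j != i by rewrite eq_sym.
pose v (b : 'Z_n) : CSRvert m n := Sub (dipole i j b) (dipole_vertex i j b).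
have : \sum_k (f k (val (v a) k) - f k (val (v 0) k)) = 0.
  by rewrite sumrB !sum_coord_vertex subrr.
rewrite (bigD1 i) // (bigD1 j) ?ji //= big1 => [|k /andP[ki kj]].
  by rewrite !dipoleE // eqxx (negbTE ji) eqxx oppr0 addr0.
by rewrite !dipoleE // (negbTE ki) (negbTE kj) subrr.
Qed.

Lemma shift_eq (i j : 'I_m) (a : 'Z_n) : (2 < m)%N ->
  f i a - f i 0 = f j a - f j 0.
Proof.
move=> m_gt2; have [<- // | ij] := eqVneq i j.
have [l /andP[li lj]] := exists_ord_neq2 i j m_gt2.
apply: (addIr (f l (- a) - f l 0)).
by rewrite !shift_oppN // eq_sym.
Qed.

End CoordinatewiseMap.

Theorem lemma7 (m n : nat) (hm : (3 < m)%N) (hn : (3 < n)%N)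
  (psi : {perm CSRvert m n}) (hpsi : csr_aut psi)
  (psis : 'I_m -> {perm 'Z_n}) (sigma : {perm 'I_m})
  (hform : forall x : CSRvert m n,
     val (psi x) = \sum_(i < m) vscale (psis i (val x i)) (e_ m n (sigma i))) :
  exists d : 'I_m -> 'Z_n,
    forall (i j : 'I_m) (a : 'Z_n), psis i a + d i = psis j a + d j.
Proof.
exists (fun i => - psis i 0) => i j a.
exact: (shift_eq (f := fun k => psis k) hform i j a (ltnW hm)).
Qed.
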